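(* Let $q\ge K$. The Specialized Augmented Code protocol is a JPLT-II protocol: it satisfies the recoverability and joint privacy conditions under Model II, and its rate is $L/(K-D+L)$.
   Context: Setup. Let $q$ be a prime power, $N\ge 1$ an integer, $B=N\log_2 q$, and $1\le L\le D\le K$ integers. Let $\mathbb{W}$ be the set of all $D$-element subsets of $[K]=\{1,\dots,K\}$. Let $\mathbb{V}_I$ be the set of $L\times D$ matrices over $\mathbb{F}_q$ that are MDS (every $L\times L$ submatrix is invertible), and $\mathbb{V}_{II}$ the set of $L\times D$ matrices over $\mathbb{F}_q$ of rank $L$. A server stores messages $X_1,\dots,X_K\in\mathbb{F}_q^N$ (row vectors), which are independent and uniformly distributed; $X$ denotes the $K\times N$ matrix with rows $X_1,\dots,X_K$, and for $S\subseteq[K]$, $X_S$ is the submatrix of rows indexed by $S$ (in increasing order). For $W\in\mathbb{W}$ and an $L\times D$ matrix $V$, the demand is $Z^{[W,V]}=VX_W=UX$, where the global coefficient matrix $U$ is the $L\times K$ matrix whose columns indexed by $W$ (in increasing order) are the columns of $V$ and whose other columns are zero. The demand support $W$ is uniform on $\mathbb{W}$; the coefficient matrix $V$ is uniform on $\mathbb{V}_I$ (Model I) or on $\mathbb{V}_{II}$ (Model II); $W,V,X$ are mutually independent. The server knows $K,D,L$ and these distributions but not the realizations of $W,V$. Protocol. The user draws private randomness $R$ independent of $(W,V,X)$ and sends a query $Q=Q^{[W,V]}$ that is a function of $(W,V,R)$; the server returns an answer $A=A^{[W,V]}$ that is a deterministic function of $(Q,X)$. Recoverability: $H(Z^{[W,V]}\mid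 A,Q,W,V)=0$. Joint privacy: for every realization $\mathrm{Q}$ of the query with positive probability and every $\tilde W\in\mathbb{W}$, $\Pr(W=\tilde W\mid Q=\mathrm{Q})=1/\binom{K}{D}$. A JPLT-I (resp. JPLT-II) protocol is a protocol satisfying recoverability and joint privacy under Model I (resp. Model II). The rate of a protocol is $H(Z^{[W,V]})/H(A)=LB/H(A)$. Specialized Augmented Code protocol (Model II). Fix, independently of $(W,V)$, a $(K-D)\times K$ MDS matrix $M$ over $\mathbb{F}_q$ (every $(K-D)\times(K-D)$ submatrix invertible; e.g., a generator matrix of a $[K,K-D]$ generalized Reed–Solomon code, which exists for $q\ge K$). Given $W\in\mathbb{W}$ and $V\in\mathbb{V}_{II}$, the user forms the global coefficient matrix $U$, the $(K-D+L)\times K$ matrix $\hat G=\begin{bmatrix}U\\ M\end{bmatrix}$, draws a uniformly random invertible $(K-D+L)\times(K-D+L)$ matrix $R$ over $\mathbb{F}_q$ (independent of everything else), and sends $G=R\hat G$ as the query. The server returns $Y=GX$. The user computes $\tilde Y=R^{-1}Y$ and reads the demand $VX_W$ as the first $L$ rows of $\tilde Y$. *)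

From HB Require Import structures.
From mathcomp Require Import all_boot all_order all_algebra.
From mathcomp Require Import reals exp.

Set Implicit Arguments.
Unset Strict Implicit.
Unset Printing Implicit Defensive.

Import Order.TTheory GRing.Theory Num.Theory.
Local Open Scope ring_scope.

Definition Pr (rT : realType) (Omega : finType) (valid : pred Omega)
  (E : pred Omega) : rT :=
  #|[set w | valid w && E w]|%:R / #|[set w | valid w]|%:R.

Definition log2 (rT : realType) (x : rT) : rT := ln x / ln 2.

Definition entropy (rT : realType) (Omega : finType) (valid : pred Omega)
  (T : finType) (Y : Omega -> T) : rT :=
  \sum_(y : T)
    (let p := Pr rT valid (fun w => Y w == y) in
     if 0 < p then - (p * log2 p) else 0).

Definition cond_entropy (rT : realType) (Omega : finType) (valid : pred Omega)
  (T S : finType) (Z : Omega -> T) (Y : Omega -> S) : rT :=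
  \sum_(y : S) \sum_(z : T)
    (let pzy := Pr rT valid (fun w => (Z w == z) && (Y w == y)) in
     let py := Pr rT valid (fun w => Y w == y) in
     if 0 < pzy then pzy * log2 (py / pzy) else 0).

Definition is_MDS (F : fieldType) (m n : nat) (A : 'M[F]_(m, n)) : Prop :=
  forall f : 'I_m -> 'I_n,
    (forall i j : 'I_m, (i < j)%N -> (f i < f j)%N) ->
    colsub f A \in unitmx.

Definition ord_opt (D k : nat) : option 'I_D := insub k.

(* Global coefficient matrix U (L x K): column j in W is the column of V *)
(* with index = position of j in W listed increasingly; other columns 0. *)
Definition global_coef (F : fieldType) (K D L : nat)
  (W : {set 'I_K}) (V : 'M[F]_(L, D)) : 'M[F]_(L, K) :=
  \matrix_(i < L, j < K)
    if j \in W then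
      match ord_opt D #|[set k in W | (k < j)%N]| with
      | Some k => V i k
      | None => 0
      end
    else 0.

(* uniform on the support = independent uniform W, V, R, X.            *)

Definition sac_space (F : finFieldType) (K D L N : nat) : finType :=
  ({set 'I_K} * 'M[F]_(L, D) * 'M[F]_(L + (K - D)) * 'M[F]_(K, N))%type.

Definition sac_valid (F : finFieldType) (K D L N : nat)
  (w : sac_space F K D L N) : bool :=
  let '(W, V, Rm, X) := w in
  [&& #|W| == D, \rank V == L & Rm \in unitmx].

Definition sac_W (F : finFieldType) (K D L N : nat)
  (w : sac_space F K D L N) : {set 'I_K} :=
  let '(W, V, Rm, X) := w in W.

Definition sac_V (F : finFieldType) (K D L N : nat)
  (w : sac_space F K D L N) : 'M[F]_(L, D) :=
  let '(W, V, Rm, X) := w in V.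

Definition sac_demand (F : finFieldType) (K D L N : nat)
  (w : sac_space F K D L N) : 'M[F]_(L, N) :=
  let '(W, V, Rm, X) := w in global_coef W V *m X.

Definition sac_query (F : finFieldType) (K D L N : nat) (M : 'M[F]_(K - D, K))
  (w : sac_space F K D L N) : 'M[F]_(L + (K - D), K) :=
  let '(W, V, Rm, X) := w in Rm *m col_mx (global_coef W V) M.

Definition sac_answer (F : finFieldType) (K D L N : nat) (M : 'M[F]_(K - D, K))
  (w : sac_space F K D L N) : 'M[F]_(L + (K - D), N) :=
  let '(W, V, Rm, X) := w in (Rm *m col_mx (global_coef W V) M) *m X.

From HB Require Import structures.
From mathcomp Require Import all_boot all_order all_algebra.
From mathcomp Require Import reals exp.
From mathcomp Require Import zify ring.
Import Order.TTheory GRing.Theory Num.Theory.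
Set Implicit Arguments. Unset Strict Implicit. Unset Printing Implicit Defensive.

(* The Specialized Augmented Code protocol is a JPLT-II protocol of rate
   L / (K - D + L).  (The hypothesis K <= q only serves to guarantee that an
   MDS matrix M exists; the proof uses the MDS property of M directly.)

   The global coefficient matrix factors as U = V P_W, where
   the D x K selection matrix P_W places the columns of V at the positions W.
   Since M is MDS, its columns outside W form an invertible square matrix, so
   the row spaces of P_W and M are independent; hence for rank-L V the
   augmented matrix [U; M] has full row rank L + (K - D).  Two consequences:
   the answer G X = R [U; M] X determines U X (recoverability), and any query
   G of the protocol has row space of dimension L + (K - D) containing M, so
   for EVERY support W of size D it can be written G = R' [V' P_W; M]; the
   pairs (V', R') doing so are in bijection with GL_L(F) (V' = A V0 for one
   fixed solution V0).

   Recoverability is a conditional entropy of a determined variable (zero);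
   privacy follows because the event {query = G} is partitioned by W into
   classes of equal size |GL_L(F)| |F^(K x N)|; the rate follows because
   w |-> A(w) X is uniform whenever A(w) has full row rank (translate X). *)

(* [position W j] is the number of elements of W smaller than j: for j in W
   it is the index of j when W is listed increasingly.  It is monotone,
   strictly so from elements of W, and injective on W. *)
Definition position (K : nat) (W : {set 'I_K}) (j : 'I_K) : nat :=
  #|[set k in W | (k < j)%N]|.

Lemma position_mono K (W : {set 'I_K}) (j j' : 'I_K) :
  (j <= j')%N -> (position W j <= position W j')%N.
Proof.
move=> le_jj'; apply: subset_leq_card; apply/subsetP=> k.
by rewrite !inE => /andP[-> /leq_trans]; apply.
Qed.

Lemma position_strict K (W : {set 'I_K}) (j j' : 'I_K) :
  j \in W -> (j < j')%N -> (position W j < position W j')%N.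
Proof.
move=> jW lt_jj'; apply: proper_card; apply/properP; split.
  by apply/subsetP=> k; rewrite !inE => /andP[-> /ltn_trans]; apply.
by exists j; rewrite !inE ?jW ?lt_jj' ?ltnn.
Qed.

Lemma position_lt K (W : {set 'I_K}) (j : 'I_K) :
  j \in W -> (position W j < #|W|)%N.
Proof.
move=> jW; apply: proper_card; apply/properP; split.
  by apply/subsetP=> k; rewrite !inE => /andP[->].
by exists j; rewrite // !inE ltnn andbF.
Qed.

Lemma position_inj K (W : {set 'I_K}) : {in W &, injective (position W)}.
Proof.
move=> j j' jW j'W e; case: (ltngtP j j') => lt; last exact: val_inj.
  by move: (position_strict jW lt); rewrite e ltnn.
by move: (position_strict j'W lt); rewrite e ltnn.
Qed.

Lemma position_onto K (W : {set 'I_K}) (i : nat) :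
  (i < #|W|)%N -> exists2 j, j \in W & position W j = i.
Proof.
move=> lt_iW.
have uniq_pos : uniq [seq position W j | j <- enum W].
  by rewrite map_inj_in_uniq ?enum_uniq // => x y; rewrite !mem_enum; apply: position_inj.
have sub_pos : {subset [seq position W j | j <- enum W] <= iota 0 #|W|}.
  by move=> x /mapP[j]; rewrite mem_enum => jW ->; rewrite mem_iota add0n position_lt.
have [|_ eq_pos] := uniq_min_size uniq_pos sub_pos; first by rewrite size_iota size_map -cardE.
have : i \in iota 0 #|W| by rewrite mem_iota.
by rewrite -eq_pos => /mapP[j]; rewrite mem_enum => jW ->; exists j.
Qed.

Lemma increasing_enum K (W : {set 'I_K}) n : #|W| = n ->
  exists f : 'I_n -> 'I_K, forall i, f i \in W /\ position W (f i) = i.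
Proof.
move=> cardW.
have enum_i (i : 'I_n) : exists j, j \in W /\ position W j = i.
  by have [|j jW <-] := @position_onto K W i; [rewrite cardW | exists j].
exact: fin_all_exists enum_i.
Qed.

Local Open Scope ring_scope.

Section Selection.
Variable F : fieldType.

Definition sel_mx (K D : nat) (W : {set 'I_K}) : 'M[F]_(D, K) :=
  \matrix_(k < D, j < K) ((j \in W) && (position W j == k))%:R.

Lemma global_coefE K D L (W : {set 'I_K}) (V : 'M[F]_(L, D)) :
  global_coef W V = V *m sel_mx D W.
Proof.
apply/matrixP => i j; rewrite !mxE.
under eq_bigr => k _ do rewrite mxE.
case jW: (j \in W) => /=; last by rewrite big1 // => k _; rewrite mulr0.
rewrite /ord_opt -/(position W j); case: insubP => [k _ vk | out].
  rewrite (bigD1 k) //= vk eqxx mulr1 big1 ?addr0 // => k' ne_k'.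
  by rewrite -vk (inj_eq val_inj) eq_sym (negbTE ne_k') mulr0.
rewrite big1 // => k' _; case: eqP => e; last by rewrite mulr0.
by move: out; rewrite e ltn_ord.
Qed.

(* P_W P_W^T = 1, so P_W has full row rank. *)
Lemma sel_mx_free K D (W : {set 'I_K}) : #|W| = D -> row_free (sel_mx D W).
Proof.
move=> cardW; have [f fP] := increasing_enum cardW.
apply/row_freeP; exists (sel_mx D W)^T; apply/matrixP => k k'; rewrite !mxE.
under eq_bigr => j _ do rewrite !mxE.
have [fW pos_f] := fP k.
rewrite (bigD1 (f k)) //= big1 ?addr0; first by rewrite fW pos_f eqxx mul1r (inj_eq val_inj).
move=> j ne_j; case jW: (j \in W) => /=; last by rewrite mul0r.
case: eqP => e; last by rewrite mul0r.
by case/eqP: ne_j; apply: (position_inj jW fW); rewrite pos_f e.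
Qed.

(* The MDS property at work: the columns of M outside W, selected by Qs,
   form an invertible matrix, while the same selection kills P_W. *)
Lemma MDS_complement_unit K D (W : {set 'I_K}) (M : 'M[F]_(K - D, K)) :
  #|W| = D -> is_MDS M ->
  exists Qs : 'M[F]_(K, K - D), sel_mx D W *m Qs = 0 /\ M *m Qs \in unitmx.
Proof.
move=> cardW mds.
have cardWc : #|~: W| = (K - D)%N by rewrite cardsCs setCK card_ord cardW.
have [g gP] := increasing_enum cardWc.
exists (\matrix_(j, i) (j == g i)%:R); split.
  apply/matrixP => k i; rewrite !mxE (bigD1 (g i)) //= big1 ?addr0.
    have [gWc _] := gP i; rewrite !mxE; move: gWc; rewrite inE => /negbTE -> /=.
    by rewrite mul0r.
  by move=> j ne_j; rewrite !mxE (negbTE ne_j) mulr0.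
have -> : M *m \matrix_(j, i) (j == g i)%:R = colsub g M.
  apply/matrixP => a i; rewrite !mxE (bigD1 (g i)) //= big1 ?addr0.
    by rewrite mxE eqxx mulr1.
  by move=> j ne_j; rewrite mxE (negbTE ne_j) mulr0.
apply: mds => i i' lt_ii'; rewrite ltnNge; apply/negP => le_g.
have [_ pos_i] := gP i; have [_ pos_i'] := gP i'.
by have := position_mono (~: W) le_g; rewrite pos_i pos_i' leqNgt lt_ii'.
Qed.

Lemma change_of_basis n k (A G : 'M[F]_(n, k)) :
  row_free A -> (A <= G)%MS ->
  G *m pinvmx A \in unitmx /\ G *m pinvmx A *m A = G.
Proof.
move=> freeA sAG.
have rankG : \rank G = n.
  by apply/eqP; rewrite eqn_leq rank_leq_row -{1}(eqP freeA) mxrankS.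
have sGA : (G <= A)%MS by rewrite -(mxrank_leqif_sup sAG).2 rankG (eqP freeA).
have GK := mulmxKpV sGA; split => //.
by rewrite -row_free_unit /row_free eqn_leq rank_leq_row -{1}rankG -{1}GK mxrankM_maxl.
Qed.
End Selection.

Section Augmented.
Variables (F : fieldType) (K D L : nat) (M : 'M[F]_(K - D, K)).
Hypothesis mds : is_MDS M.

Definition aug (W : {set 'I_K}) (V : 'M[F]_(L, D)) : 'M[F]_(L + (K - D), K) :=
  col_mx (global_coef W V) M.

Lemma blocks_sub_aug W V : (global_coef W V <= aug W V)%MS /\ (M <= aug W V)%MS.
Proof. by have := submx_refl (aug W V); rewrite {2}/aug col_mx_sub => /andP. Qed.

Lemma MDS_indep (W : {set 'I_K}) m (b : 'M[F]_(m, K - D)) (E : 'M[F]_(m, D)) :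
  #|W| = D -> b *m M = E *m sel_mx F D W -> b = 0.
Proof.
move=> cardW eq_bE; have [Qs [PQs MQs]] := MDS_complement_unit cardW mds.
have bMQs : b *m (M *m Qs) = 0 by rewrite mulmxA eq_bE -mulmxA PQs mulmx0.
by rewrite -(mulmxK MQs b) bMQs mul0mx.
Qed.

Lemma global_coef_free (W : {set 'I_K}) (V : 'M[F]_(L, D)) :
  #|W| = D -> \rank V = L -> row_free (global_coef W V).
Proof. by move=> cardW rankV; rewrite /row_free global_coefE mxrankMfree ?rankV ?sel_mx_free. Qed.

Lemma aug_free (W : {set 'I_K}) (V : 'M[F]_(L, D)) :
  #|W| = D -> \rank V = L -> row_free (aug W V).
Proof.
move=> cardW rankV; rewrite -kermx_eq0; apply/eqP.
set x := kermx (aug W V).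
have : x *m aug W V = 0 by apply/sub_kermxP.
rewrite -[x]hsubmxK mul_row_col global_coefE => kerx.
have x2_0 : rsubmx x = 0.
  apply: (MDS_indep (E := - (lsubmx x *m V)) cardW).
  by rewrite mulNmx -mulmxA; apply/eqP; rewrite -addr_eq0 addrC kerx.
move: kerx; rewrite x2_0 mul0mx addr0 -global_coefE => kerx.
have x1_0 : lsubmx x = 0.
  by apply: (row_free_inj (global_coef_free cardW rankV)); rewrite kerx mul0mx.
by rewrite x1_0 row_mx0.
Qed.

Lemma coef_sub_support (W : {set 'I_K}) (V Vb : 'M[F]_(L, D)) :
  #|W| = D -> (global_coef W V <= aug W Vb)%MS -> (V <= Vb)%MS.
Proof.
move=> cardW /submxP[C]; rewrite /aug -(hsubmxK C) mul_row_col !global_coefE => eqC.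
have C2_0 : rsubmx C = 0.
  by apply: (MDS_indep (E := V - lsubmx C *m Vb) cardW); rewrite mulmxBl eqC mulmxA addrC addKr.
move: eqC; rewrite C2_0 mul0mx addr0 mulmxA => /(row_free_inj (sel_mx_free F cardW)) ->.
exact: submxMl.
Qed.

Lemma coef_in_span (G : 'M[F]_(L + (K - D), K)) (W : {set 'I_K}) :
  (D <= K)%N -> (M <= G)%MS -> \rank G = (L + (K - D))%N -> #|W| = D ->
  exists2 V : 'M[F]_(L, D), \rank V = L & (global_coef W V <= G)%MS.
Proof.
move=> le_DK sMG rankG cardW.
set P := sel_mx F D W.
have rankP : \rank P = D by apply/eqP; apply: sel_mx_free.
set T := (G :&: P)%MS.
have rank_cap : (L <= \rank T)%N.
  have := mxrank_sum_cap G P; have := rank_leq_col (G + P)%MS.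
  by rewrite rankG rankP /T; lia.
set Y := (pid_mx L : 'M_(L, \rank T)) *m row_base T.
have rankY : \rank Y = L by rewrite /Y mxrankMfree ?row_base_free // rank_pid_mx.
have sYT : (Y <= T)%MS by rewrite /Y (submx_trans (submxMl _ _)) // eq_row_base.
have YP : Y *m pinvmx P *m P = Y by apply/mulmxKpV/(submx_trans sYT)/capmxSr.
exists (Y *m pinvmx P); last by rewrite global_coefE YP (submx_trans sYT) // capmxSl.
by move: rankY; rewrite -{1}YP mxrankMfree //; apply: sel_mx_free.
Qed.
Lemma aug_span (G : 'M[F]_(L + (K - D), K)) (W : {set 'I_K}) (V : 'M[F]_(L, D)) :
  #|W| = D -> \rank V = L -> (global_coef W V <= G)%MS -> (M <= G)%MS ->
  (G :=: aug W V)%MS.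
Proof.
move=> cardW rankV sUG sMG.
have sAG : (aug W V <= G)%MS by rewrite col_mx_sub sUG.
apply/eqmx_sym/eqmxP; rewrite -(mxrank_leqif_eq sAG).2 eqn_leq mxrankS //=.
by rewrite (eqP (aug_free cardW rankV)) rank_leq_row.
Qed.
End Augmented.

Section FiniteProbability.
Variable rT : realType.

Lemma card_partition (Om J : finType) (P : pred Om) (p : Om -> J) (Q : {set J}) :
  (forall w, P w -> p w \in Q) ->
  #|[set w | P w]| = (\sum_(j in Q) #|[set w | P w && (p w == j)]|)%N.
Proof.
move=> PQ; rewrite -sum1_card (eq_bigl P) => [|w]; last by rewrite inE.
rewrite (partition_big p (mem Q)) //; apply: eq_bigr => j _.
by rewrite -sum1_card; apply: eq_bigl => w; rewrite inE.
Qed.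

Lemma Pr_gt0_witness (Om : finType) (valid E : pred Om) :
  0 < Pr rT valid E -> exists2 w, valid w & E w.
Proof.
move=> PE; have : [set w | valid w && E w] != set0.
  by apply: contraTneq PE => empty; rewrite /Pr empty cards0 mul0r ltxx.
by case/set0Pn => w; rewrite inE => /andP[]; exists w.
Qed.

Lemma cond_entropy_determined (Om T S : finType) (valid : pred Om)
    (Z : Om -> T) (Y : Om -> S) :
  (forall w1 w2, valid w1 -> valid w2 -> Y w1 = Y w2 -> Z w1 = Z w2) ->
  cond_entropy rT valid Z Y = 0.
Proof.
move=> YZ; rewrite /cond_entropy big1 // => y _; rewrite big1 // => z _ /=.
case: ifP => // PZY.
suff -> : Pr rT valid (fun w => Y w == y) =
          Pr rT valid (fun w => (Z w == z) && (Y w == y)).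
  by rewrite divff ?gt_eqF // /log2 ln1 !mul0r mulr0.
have [w0 valid0 /andP[/eqP Zw0 /eqP Yw0]] := Pr_gt0_witness PZY.
rewrite /Pr; congr (_%:R / _); apply: eq_card => w; rewrite !inE.
case validw: (valid w) => //=; case: (Y w =P y) => [Yw|_]; last by rewrite andbF.
by rewrite andbT (YZ w w0) // ?Zw0 ?eqxx // Yw Yw0.
Qed.

Lemma entropy_equal_fibers (Om T : finType) (valid : pred Om) (Y : Om -> T) :
  (0 < #|[set w | valid w]|)%N ->
  (forall y y', (#|[set w | valid w && (Y w == y)]|
                  <= #|[set w | valid w && (Y w == y')]|)%N) ->
  entropy rT valid Y = log2 (#|T|%:R).
Proof.
move=> support_gt0 fiber_le.
have [w0 _] : exists w0, w0 \in [set w | valid w] by apply/set0Pn; rewrite -card_gt0.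
set c := #|[set w | valid w && (Y w == Y w0)]|.
have fiberE y : #|[set w | valid w && (Y w == y)]| = c by apply/eqP; rewrite eqn_leq !fiber_le.
have total : #|[set w | valid w]| = (#|T| * c)%N.
  rewrite (@card_partition _ _ _ Y setT) // (eq_bigr (fun _ => c)) => [|y _]; last by rewrite fiberE.
  by rewrite sum_nat_const cardsT.
have T_gt0 : (0 < #|T|)%N by apply/card_gt0P; exists (Y w0).
have c_gt0 : (0 < c)%N by move: support_gt0; rewrite total muln_gt0 => /andP[].
have T0 : (#|T|%:R : rT) != 0 by rewrite pnatr_eq0 -lt0n.
have PrE y : Pr rT valid (fun w => Y w == y) = (#|T|%:R)^-1.
  by rewrite /Pr fiberE total natrM invfM mulrCA divff ?mulr1 // pnatr_eq0 -lt0n.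
rewrite /entropy (eq_bigr (fun _ => - ((#|T|%:R)^-1 * log2 ((#|T|%:R)^-1 : rT)))); last first.
  by move=> y _ /=; rewrite PrE invr_gt0 ltr0n T_gt0.
rewrite sumr_const /log2 lnV ?posrE ?ltr0n // mulNr mulrN opprK -mulrnAl -mulr_natr.
by rewrite mulVf ?mul1r.
Qed.

Lemma Pr_equal_classes (Om J : finType) (valid P : pred Om) (p : Om -> J)
    (Q : {set J}) (c : nat) :
  (forall w, valid w -> P w -> p w \in Q) ->
  (forall j, j \in Q -> #|[set w | valid w && ((p w == j) && P w)]| = c) ->
  0 < Pr rT valid P -> forall j, j \in Q ->
  Pr rT valid (fun w => (p w == j) && P w) / Pr rT valid P = (#|Q|%:R)^-1.
Proof.
move=> PQ classE PrP j jQ.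
have total : #|[set w | valid w && P w]| = (#|Q| * c)%N.
  rewrite (@card_partition _ _ _ p Q) => [|w /andP[]]; last exact: PQ.
  rewrite (eq_bigr (fun _ => c)) ?sum_nat_const // => j' j'Q.
  by rewrite -(classE j' j'Q); apply: eq_card => w; rewrite !inE -andbA [P w && _]andbC.
move: PrP; rewrite /Pr total (classE j jQ) natrM => /lt0r_neq0.
rewrite !mulf_eq0 invr_eq0 !negb_or => /andP[/andP[Q0 c0] n0].
move: Q0 c0 n0; move: (#|Q|%:R : rT) (c%:R : rT) (#|[set w | valid w]|%:R : rT) => a b d a0 b0 d0.
by field; rewrite a0 b0 d0.
Qed.

Lemma log2_card_mx_ratio (F : finFieldType) (m n N : nat) :
  (0 < n)%N -> (0 < N)%N ->
  log2 (#|'M[F]_(m, N)|%:R : rT) / log2 (#|'M[F]_(n, N)|%:R) = m%:R / n%:R.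
Proof.
move=> n_gt0 N_gt0.
have q_gt1 : 1 < (#|F|%:R : rT) by rewrite ltr1n card_finNzRing_gt1.
have lnq0 : ln (#|F|%:R : rT) != 0 by rewrite gt_eqF // ln_gt0.
have q_gt0 : 0 < (#|F|%:R : rT) by apply: lt_trans q_gt1.
have ln20 : ln (2 : rT) != 0 by rewrite gt_eqF // ln_gt0 // ltr1n.
have n0 : (n%:R : rT) != 0 by rewrite pnatr_eq0 -lt0n.
have N0 : (N%:R : rT) != 0 by rewrite pnatr_eq0 -lt0n.
rewrite !card_mx /log2 !natrX !lnXn // -(mulr_natr _ (m * N)) -(mulr_natr _ (n * N)) !natrM.
move: lnq0 ln20 n0 N0; move: (ln (#|F|%:R : rT)) (ln (2 : rT)) (n%:R : rT) (N%:R : rT) (m%:R : rT).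
by move=> a b x y z a0 b0 x0 y0; field; rewrite a0 b0 x0 y0.
Qed.
End FiniteProbability.

Section Protocol.
Variables (F : finFieldType) (K D L N : nat) (M : 'M[F]_(K - D, K)).
Local Notation Om := (sac_space F K D L N).
Local Notation valid := (@sac_valid F K D L N).

(* The support is nonempty: (W, [1 0], 1, 0) is valid for any W of size D. *)
Lemma valid_nonempty : (L <= D)%N -> (D <= K)%N -> (0 < #|[set w : Om | valid w]|)%N.
Proof.
move=> le_LD le_DK.
have : (0 < #|[set W : {set 'I_K} | #|W| == D]|)%N by rewrite card_draws card_ord bin_gt0.
case/card_gt0P => W0; rewrite inE => cardW0; apply/card_gt0P.
exists (W0, pid_mx L, 1%:M, 0); rewrite inE /=.
by rewrite cardW0 rank_pid_mx // eqxx unitmx1.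
Qed.

(* If A(w) always has full row rank, w |-> A(w) X is uniform: translating X
   by a preimage of y' - y maps the fiber over y injectively into that over y'. *)
Lemma linear_output_entropy (rT : realType) (m : nat)
    (A : {set 'I_K} -> 'M[F]_(L, D) -> 'M[F]_(L + (K - D)) -> 'M[F]_(m, K)) :
  (L <= D)%N -> (D <= K)%N ->
  (forall w : Om, valid w -> let '(W, V, R, _) := w in row_free (A W V R)) ->
  entropy rT valid (fun w : Om => let '(W, V, R, X) := w in A W V R *m X)
  = log2 (#|'M[F]_(m, N)|%:R).
Proof.
move=> le_LD le_DK freeA; apply: entropy_equal_fibers; first exact: valid_nonempty.
move=> y y'; set d := y' - y.
pose shift (w : Om) : Om := let '(W, V, R, X) := w in (W, V, R, X + pinvmx (A W V R) *m d).
pose unshift (w : Om) : Om := let '(W, V, R, X) := w in (W, V, R, X - pinvmx (A W V R) *m d).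
have shiftK : cancel shift unshift by case=> [[[W V] R] X] /=; rewrite addrK.
rewrite -(card_imset _ (can_inj shiftK)); apply: subset_leq_card.
apply/subsetP => w' /imsetP [w]; rewrite inE => /andP[validw Ew] ->.
move: validw Ew (freeA w); case: w => [[[W V] R] X] /= validw /eqP Ew free.
rewrite inE; apply/andP; split; first exact: validw.
by rewrite /= mulmxDr mulmxA mulmxVp ?free // mul1mx Ew /d addrC subrK.
Qed.

Lemma sac_demand_entropy (rT : realType) :
  (L <= D)%N -> (D <= K)%N ->
  entropy rT valid (@sac_demand F K D L N) = log2 (#|'M[F]_(L, N)|%:R).
Proof.
move=> le_LD le_DK; apply: (@linear_output_entropy rT _ (fun W V _ => global_coef W V)) => //.
by case=> [[[W V] R] X] /and3P[/eqP cardW /eqP rankV _]; apply: global_coef_free.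
Qed.

Lemma sac_answer_entropy (rT : realType) :
  (L <= D)%N -> (D <= K)%N -> is_MDS M ->
  entropy rT valid (sac_answer M) = log2 (#|'M[F]_(L + (K - D), N)|%:R).
Proof.
move=> le_LD le_DK mds.
apply: (@linear_output_entropy rT _ (fun W V R => R *m aug M W V)) => //.
case=> [[[W V] R] X] /and3P[/eqP cardW /eqP rankV unitR].
by rewrite /row_free (eqmxMfull _ (_ : row_full R)) ?row_full_unit //; apply: aug_free.
Qed.

(* Recoverability: the answer and the query determine the demand, since
   R^-1 Y = [U X; M X]. *)
Lemma sac_recoverable (rT : realType) :
  cond_entropy rT valid (@sac_demand F K D L N)
    (fun w => (sac_answer M w, sac_query M w, sac_W w, sac_V w)) = 0.
Proof.
apply: cond_entropy_determined.
case=> [[[W1 V1] R1] X1] [[[W2 V2] R2] X2] /= /and3P[_ _ unitR1] _ [eqY eqG <- <-].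
have undo (X : 'M[F]_(K, N)) : aug M W1 V1 *m X = invmx R1 *m (R1 *m aug M W1 V1 *m X).
  by rewrite -mulmxA mulKmx.
have : aug M W1 V1 *m X1 = aug M W1 V1 *m X2 by rewrite undo [in LHS]eqY -eqG -undo.
by rewrite !mul_col_mx => /(congr1 usubmx); rewrite !col_mxKu.
Qed.
End Protocol.

Section Privacy.
Variables (F : finFieldType) (K D L N : nat) (M : 'M[F]_(K - D, K)).
Hypotheses (mds : is_MDS M) (le_DK : (D <= K)%N).
Local Notation Om := (sac_space F K D L N).
Local Notation valid := (@sac_valid F K D L N).

Definition query_fiber (G : 'M[F]_(L + (K - D), K)) (W : {set 'I_K}) : {set Om} :=
  [set w | valid w && ((sac_W w == W) && (sac_query M w == G))].

Lemma query_support_witness (w1 : Om) (W : {set 'I_K}) :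
  valid w1 -> #|W| = D ->
  exists2 Vb : 'M[F]_(L, D), \rank Vb = L & (sac_query M w1 :=: aug M W Vb)%MS.
Proof.
case: w1 => [[[W1 V1] R1] X1] /and3P[/eqP cardW1 /eqP rankV1 unitR1] cardW.
rewrite /= -/(aug M W1 V1).
have G_aug1 : (R1 *m aug M W1 V1 :=: aug M W1 V1)%MS by apply/eqmxMfull; rewrite row_full_unit.
have sMG : (M <= R1 *m aug M W1 V1)%MS by rewrite G_aug1; case: (blocks_sub_aug M W1 V1).
have rankG : \rank (R1 *m aug M W1 V1) = (L + (K - D))%N.
  by rewrite G_aug1; apply/eqP/aug_free.
have [Vb rankVb sUG] := coef_in_span le_DK sMG rankG cardW.
by exists Vb => //; apply: aug_span.
Qed.

Section Fiber.
Variables (G : 'M[F]_(L + (K - D), K)) (W : {set 'I_K}) (Vb : 'M[F]_(L, D)).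
Hypotheses (cardW : #|W| = D) (rankVb : \rank Vb = L) (G_aug : (G :=: aug M W Vb)%MS).

Lemma fiber_change_of_basis (V : 'M[F]_(L, D)) : \rank V = L -> (V <= Vb)%MS ->
  G *m pinvmx (aug M W V) \in unitmx /\ G *m pinvmx (aug M W V) *m aug M W V = G.
Proof.
move=> rankV sVVb; apply: change_of_basis (aug_free mds cardW rankV) _.
have [sUaug sMaug] := blocks_sub_aug M W Vb.
rewrite G_aug {1}/aug col_mx_sub sMaug andbT (submx_trans _ sUaug) // !global_coefE.
exact: submxMr.
Qed.

(* The fiber is parametrized by GL_L(F) x F^(K x N): V = A Vb, R is then
   determined, and X is free. *)
Definition fiber_point (AX : 'M[F]_L * 'M[F]_(K, N)) : Om :=
  let V := AX.1 *m Vb in (W, V, G *m pinvmx (aug M W V), AX.2).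

Lemma fiber_point_in (AX : 'M[F]_L * 'M[F]_(K, N)) :
  AX.1 \in unitmx -> fiber_point AX \in query_fiber G W.
Proof.
case: AX => A X /= unitA.
have rankV : \rank (A *m Vb) = L by rewrite mxrankMfree ?mxrank_unit // /row_free rankVb.
have [unitR eqR] := fiber_change_of_basis rankV (submxMl _ _).
by rewrite inE /= cardW rankV unitR !eqxx /=; apply/eqP.
Qed.

Lemma fiber_point_onto (w : Om) :
  w \in query_fiber G W -> exists2 AX, AX.1 \in unitmx & w = fiber_point AX.
Proof.
case: w => [[[W' V] R] X]; rewrite inE => /andP[/and3P[_ /eqP rankV unitR]].
move=> /andP[/eqP /= eqW /eqP eqG]; subst W'; rewrite /= -/(aug M W V) in eqG.
have sVVb : (V <= Vb)%MS.
  apply: (coef_sub_support mds cardW); rewrite -G_aug -eqG.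
  by rewrite (eqmxMfull _ (_ : row_full R)) ?row_full_unit //; case: (blocks_sub_aug M W V).
have [unitR' eqR'] := fiber_change_of_basis rankV sVVb.
exists (V *m pinvmx Vb, X); rewrite /fiber_point /= ?mulmxKpV //.
  by rewrite -row_free_unit /row_free eqn_leq rank_leq_row -{1}rankV -{1}(mulmxKpV sVVb) mxrankM_maxl.
by congr (_, _, _, _); apply: (row_free_inj (aug_free mds cardW rankV)); rewrite eqR' eqG.
Qed.

(* A is recovered from A Vb since Vb has full row rank. *)
Lemma fiber_point_inj : injective fiber_point.
Proof.
have freeVb : row_free Vb by rewrite /row_free rankVb.
by case=> [A X] [A' X'] [/(row_free_inj freeVb) -> _ ->].
Qed.

(* Hence the fiber size does not depend on the support W. *)
Lemma query_fiber_card :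
  #|query_fiber G W| = (#|[set A : 'M[F]_L | A \in unitmx]| * #|'M[F]_(K, N)|)%N.
Proof.
have -> : query_fiber G W = fiber_point @: setX [set A | A \in unitmx] setT.
  apply/setP => w; apply/idP/imsetP => [/fiber_point_onto[AX unitA ->] | [[A X]]].
    by exists AX => //; rewrite !inE unitA.
  by case/setXP; rewrite inE => unitA _ ->; apply: fiber_point_in.
by rewrite card_imset ?cardsX ?cardsT //; apply: fiber_point_inj.
Qed.
End Fiber.

Lemma sac_private (rT : realType) (G : 'M[F]_(L + (K - D), K)) :
  0 < Pr rT valid (fun w => sac_query M w == G) ->
  forall Wt : {set 'I_K}, #|Wt| = D ->
  Pr rT valid (fun w => (sac_W w == Wt) && (sac_query M w == G))
    / Pr rT valid (fun w => sac_query M w == G) = ('C(K, D)%:R)^-1.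
Proof.
move=> PrG Wt cardWt.
have [w1 valid1 /eqP qG] := Pr_gt0_witness PrG.
have <- : #|[set W : {set 'I_K} | #|W| == D]| = 'C(K, D) by rewrite card_draws card_ord.
apply: (@Pr_equal_classes rT _ _ _ _ _ _
  (#|[set A : 'M[F]_L | A \in unitmx]| * #|'M[F]_(K, N)|)) => //; last by rewrite inE cardWt.
  by case=> [[[W V] R] X] /and3P[cardW _ _] _; rewrite inE.
move=> W; rewrite inE => /eqP cardW.
have [Vb rankVb G_aug] := query_support_witness valid1 cardW.
by rewrite qG in G_aug; apply: query_fiber_card G_aug.
Qed.
End Privacy.

Theorem lemma6 (rT : realType) (F : finFieldType) (K D L N : nat)
  (M : 'M[F]_(K - D, K)) :
  (1 <= N)%N -> (1 <= L)%N -> (L <= D)%N -> (D <= K)%N ->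
  (K <= #|F|)%N -> is_MDS M ->
  let valid := @sac_valid F K D L N in
  (* recoverability: H(Z | A, Q, W, V) = 0 *)
  [/\ cond_entropy rT valid (@sac_demand F K D L N)
        (fun w => (sac_answer M w, sac_query M w, sac_W w, sac_V w)) = 0,
  (* joint privacy *)
      (forall (G0 : 'M[F]_(L + (K - D), K)),
          0 < Pr rT valid (fun w => sac_query M w == G0) ->
          forall Wt : {set 'I_K}, #|Wt| = D ->
            Pr rT valid (fun w => (sac_W w == Wt) && (sac_query M w == G0))
              / Pr rT valid (fun w => sac_query M w == G0)
            = ('C(K, D)%:R)^-1)
    & (* rate H(Z)/H(A) = L / (K - D + L) *)
      entropy rT valid (@sac_demand F K D L N)
        / entropy rT valid (sac_answer M) = L%:R / (K - D + L)%:R].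
Proof.
move=> N_gt0 L_gt0 le_LD le_DK _ mds valid; split.
- exact: sac_recoverable.
- exact: (sac_private mds le_DK).
- rewrite sac_demand_entropy // sac_answer_entropy // log2_card_mx_ratio ?addn_gt0 ?L_gt0 //.
  by rewrite addnC.
Qed.
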